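(* If $G$ and $H$ are connected graphs, then $\chi_{\mu_2}(G\,\square\, H)\ge \max\{\chi_{\mu_2}(G)\rho_2(H),\ \chi_{\mu_2}(H)\rho_2(G)\}$, and this bound is sharp.
   Context: The Cartesian product $G\,\square\, H$ has vertex set $V(G)\times V(H)$, with $(g,h)$ adjacent to $(g',h')$ iff either $g=g'$ and $hh'\in E(H)$, or $gg'\in E(G)$ and $h=h'$. A set $S\subseteq V(G)$ is a $2$-packing if $N_G[u]\cap N_G[v]=\emptyset$ for all distinct $u,v\in S$ (closed neighborhoods); $\rho_2(G)$ is the maximum size of a $2$-packing. A set $M\subseteq V(X)$ is a $2$-distance mutual-visibility set if for every two vertices $u,v\in M$ there exists a shortest $u,v$-path of length at most $2$ none of whose internal vertices lies in $M$. $\chi_{\mu_2}(X)$ is the minimum cardinality of a partition of $V(X)$ into $2$-distance mutual-visibility sets. *)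

From mathcomp Require Import all_boot.
Set Implicit Arguments. Unset Strict Implicit. Unset Printing Implicit Defensive.

Record sgraph := SGraph {
  vert :> finType;
  adj : rel vert;
  adj_sym : symmetric adj;
  adj_irr : irreflexive adj }.

Definition connected (G : sgraph) : Prop := forall x y : G, connect (@adj G) x y.

Definition cart_adj (G H : sgraph) : rel (prod (vert G) (vert H)) :=
  fun x y => ((x.1 == y.1) && adj x.2 y.2) || (adj x.1 y.1 && (x.2 == y.2)).

Lemma cart_adj_sym G H : symmetric (@cart_adj G H).
Proof.
move=> [g h] [g' h']; rewrite /cart_adj /= (eq_sym g) (eq_sym h).
by rewrite (adj_sym h) (adj_sym g).
Qed.

Lemma cart_adj_irr G H : irreflexive (@cart_adj G H).
Proof. by move=> [g h]; rewrite /cart_adj /= !adj_irr !andbF andFb. Qed.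

Definition cartesian (G H : sgraph) : sgraph :=
  SGraph (@cart_adj_sym G H) (@cart_adj_irr G H).

Definition closed_nbhd (G : sgraph) (u : G) : {set G} :=
  [set x | (x == u) || adj u x].

Definition two_packing (G : sgraph) (S : {set G}) : bool :=
  [forall u in S, forall v in S,
     (u != v) ==> [disjoint closed_nbhd u & closed_nbhd v]].

Definition rho2 (G : sgraph) : nat :=
  \max_(S : {set G} | two_packing S) #|S|.

(* 2-distance mutual-visibility set: for distinct u, v in M there is a
   shortest u,v-path of length <= 2 with no internal vertex in M, i.e.
   u, v adjacent, or non-adjacent with a common neighbour outside M. *)
Definition dmv2 (G : sgraph) (M : {set G}) : bool :=
  [forall u in M, forall v in M, (u != v) ==>
     (adj u v || [exists w, (w \notin M) && adj u w && adj w v])].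

(* V(G) can be partitioned into (at most) k 2-distance mutual-visibility
   sets: a colouring with k colours whose classes are all dmv2 sets
   (empty classes allowed, which does not change the minimum). *)
Definition dmv2_colorable (G : sgraph) (k : nat) : bool :=
  [exists f : {ffun G -> 'I_k}, forall i : 'I_k, dmv2 [set x | f x == i]].

Lemma dmv2_colorable_ex (G : sgraph) : exists k, dmv2_colorable G k.
Proof.
exists #|G|; apply/existsP; exists [ffun x => enum_rank x].
apply/forallP => i; apply/forallP => u; apply/implyP => Hu.
apply/forallP => v; apply/implyP => Hv; apply/implyP => Huv.
rewrite !inE !ffunE in Hu Hv.
have E : u = v by apply: enum_rank_inj; rewrite (eqP Hu) (eqP Hv).
by rewrite E eqxx in Huv.
Qed.

Definition chi_mu2 (G : sgraph) : nat := ex_minn (dmv2_colorable_ex G).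

From mathcomp Require Import all_boot.
Set Implicit Arguments. Unset Strict Implicit. Unset Printing Implicit Defensive.

(* Fix a 2-distance mutual-visibility colouring of G □ H. Two vertices of a
   layer G × {h} have no common neighbour outside that layer, so the colouring
   restricts to one of G and each layer sees at least chi_mu2(G) colours. Two
   vertices of the same colour are at distance at most 2, so their
   H-coordinates have intersecting closed neighbourhoods; hence the layers
   over the vertices of a 2-packing of H use pairwise disjoint colour sets,
   and there are at least chi_mu2(G) * rho2(H) colours. Equality holds for
   K2 □ P3: it has a 2-colouring, while chi_mu2(P3) = 2 (the two leaves only
   see each other through the centre) and rho2(K2) = 1. *)

Lemma sum_card_disjoint_le (I T : finType) (J : {pred I}) (F : I -> {set T}) :
  {in J &, forall i j, i != j -> [disjoint F i & F j]} ->
  \sum_(i in J) #|F i| <= #|T|.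
Proof.
move=> disjF; pose F' i := if i \in J then F i else set0.
have disjF' i j : i != j -> [disjoint F' i & F' j].
  rewrite /F' -setI_eq0; case: ifP => Ji; case: ifP => Jj ij;
    rewrite ?setI0 ?set0I // setI_eq0; exact: disjF.
have -> : \sum_(i in J) #|F i| = \sum_i #|F' i|.
  by rewrite big_mkcond; apply: eq_bigr => i _; rewrite /F'; case: ifP; rewrite ?cards0.
have := partition_disjoint_bigcup addn (fun=> 1) disjF'.
rewrite /= sum1_card (eq_bigr (fun i => #|F' i|)) => [<-|i _]; last exact: sum1_card.
exact: max_card.
Qed.

Section Dmv2.

Variable G : sgraph.
Implicit Types (M : {set G}) (u v : G).

Lemma dmv2P M :
  reflect {in M &, forall u v, u != v ->
             adj u v || [exists w, (w \notin M) && adj u w && adj w v]}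
          (dmv2 M).
Proof.
apply: (iffP forallP) => [dmvM u v uM vM | dmvM u].
  by move: (dmvM u) => /implyP/(_ uM)/forallP/(_ v)/implyP/(_ vM)/implyP.
apply/implyP => uM; apply/forallP => v; apply/implyP => vM; apply/implyP.
exact: dmvM.
Qed.

Lemma closed_nbhd_refl u : u \in closed_nbhd u.
Proof. by rewrite inE eqxx. Qed.

Lemma two_packing_disjoint (S : {set G}) : two_packing S ->
  {in S &, forall u v, u != v -> [disjoint closed_nbhd u & closed_nbhd v]}.
Proof.
move=> /forallP packS u v uS vS; move: (packS u) => /implyP/(_ uS)/forallP/(_ v).
by move=> /implyP/(_ vS)/implyP.
Qed.

Lemma chi_mu2_min k : dmv2_colorable G k -> chi_mu2 G <= k.
Proof. by rewrite /chi_mu2; case: ex_minnP => m _; apply. Qed.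

Lemma chi_mu2_colorable : dmv2_colorable G (chi_mu2 G).
Proof. by rewrite /chi_mu2; case: ex_minnP. Qed.

Lemma chi_mu2_le_card_image (T : finType) (f : G -> T) :
  (forall c, dmv2 [set x | f x == c]) -> chi_mu2 G <= #|[set f x | x : G]|.
Proof.
move=> dmv_f; have im_f x : f x \in [set f x | x : G] by apply: imset_f.
(* [im_f x] is only the default for [enum_rank_in]: [G] may be empty. *)
apply: chi_mu2_min; apply/existsP; exists [ffun x => enum_rank_in (im_f x) (f x)].
apply/forallP => i.
suff -> : [set x | [ffun x => enum_rank_in (im_f x) (f x)] x == i]
        = [set x | f x == enum_val i] by [].
apply/setP => x; rewrite !inE ffunE; apply/eqP/eqP => [<-|fx].
  by rewrite enum_rankK_in.
by apply: enum_val_inj; rewrite enum_rankK_in.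
Qed.

Lemma chi_mu2_gt1 v : ~~ dmv2 [set: G] -> 1 < chi_mu2 G.
Proof.
move=> not_dmvT; have /existsP[f dmv_f] := chi_mu2_colorable.
move: f dmv_f; case: (chi_mu2 G) => [|[|//]] f dmv_f; first by case: (f v).
have classT : [set x | f x == ord0] = [set: G] by apply/setP => x; rewrite !inE ord1.
by move: (forallP dmv_f ord0); rewrite classT (negbTE not_dmvT).
Qed.

Lemma two_packing1 u : two_packing [set u].
Proof.
apply/forallP => x; apply/implyP; rewrite inE => /eqP ->.
by apply/forallP => y; apply/implyP; rewrite inE => /eqP ->; rewrite eqxx.
Qed.

Lemma rho2_gt0 u : 0 < rho2 G.
Proof.
rewrite /rho2 -(cards1 u).
exact: (@leq_bigmax_cond _ (@two_packing G) (fun S => #|S|) _ (two_packing1 u)).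
Qed.

Lemma rho2_attained : exists2 S : {set G}, two_packing S & #|S| = rho2 G.
Proof.
have : 0 < #|@two_packing G|.
  by apply/card_gt0P; exists set0; rewrite unfold_in; apply/forallP => u; rewrite inE.
case/(eq_bigmax_cond (fun S : {set G} => #|S|)) => S packS eqS.
by exists S; rewrite // /rho2 eqS.
Qed.

End Dmv2.

Lemma dmv2_preimage (G G' : sgraph) (phi : G -> G') (psi : G' -> G) (M : {set G'}) :
  cancel phi psi -> cancel psi phi -> {mono phi : x y / adj x y} ->
  dmv2 M -> dmv2 (phi @^-1: M).
Proof.
move=> phiK psiK phi_adj /dmv2P dmvM; apply/dmv2P => u v; rewrite !inE => uM vM uv.
have /dmvM : phi u != phi v by rewrite (can_eq phiK).
rewrite phi_adj => /(_ uM vM) /orP[-> // | /existsP[w /andP[/andP[wM uw] wv]]].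
apply/orP; right; apply/existsP; exists (psi w).
by rewrite inE -!phi_adj psiK wM uw wv.
Qed.

Lemma chi_mu2_le_iso (G G' : sgraph) (phi : G -> G') (psi : G' -> G) :
  cancel phi psi -> cancel psi phi -> {mono phi : x y / adj x y} ->
  chi_mu2 G <= chi_mu2 G'.
Proof.
move=> phiK psiK phi_adj; have /existsP[f dmv_f] := chi_mu2_colorable G'.
apply: chi_mu2_min; apply/existsP; exists [ffun x => f (phi x)]; apply/forallP => i.
have -> : [set x | [ffun x => f (phi x)] x == i] = phi @^-1: [set y | f y == i].
  by apply/setP => x; rewrite !inE ffunE.
exact: dmv2_preimage phiK psiK phi_adj (forallP dmv_f i).
Qed.

Section Cartesian.

Variables G H : sgraph.
Implicit Types (g : G) (h : H) (M : {set cartesian G H}).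

Lemma cart_adj_layer g g' h : @adj (cartesian G H) (g, h) (g', h) = adj g g'.
Proof. by rewrite /= /cart_adj /= eqxx adj_irr andbF andbT. Qed.

Lemma cart_adj_offlayer g g' h h' :
  h != h' -> @adj (cartesian G H) (g, h) (g', h') = (g == g') && adj h h'.
Proof. by move=> /negbTE hh'; rewrite /= /cart_adj /= hh' andbF orbF. Qed.

Lemma cart_adj_nbhd (x y : cartesian G H) : adj x y -> y.2 \in closed_nbhd x.2.
Proof.
by rewrite inE => /orP[/andP[_ ->] | /andP[_ /eqP->]]; rewrite ?eqxx ?orbT.
Qed.

Definition layer M h : {set G} := [set g | (g, h) \in M].

Lemma dmv2_layer M h : dmv2 M -> dmv2 (layer M h).
Proof.
move=> /dmv2P dmvM; apply/dmv2P => u v; rewrite !inE => uM vM uv.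
have /(dmvM _ _ uM vM) : (u, h) != (v, h) by rewrite xpair_eqE (negbTE uv).
rewrite cart_adj_layer => /orP[-> // | /existsP[[a b] /andP[/andP[abM ua] av]]].
have [eq_bh | bh] := eqVneq b h.
  subst b; rewrite !cart_adj_layer in ua av.
  by apply/orP; right; apply/existsP; exists a; rewrite inE abM ua av.
have hb : h != b by rewrite eq_sym.
rewrite (cart_adj_offlayer _ _ hb) in ua; rewrite (cart_adj_offlayer _ _ bh) in av.
by case/andP: ua => /eqP ua _; case/andP: av => /eqP av _; rewrite ua av eqxx in uv.
Qed.

Lemma dmv2_cart_nbhd_meet M x y : dmv2 M -> x \in M -> y \in M -> x != y ->
  exists2 b, b \in closed_nbhd x.2 & b \in closed_nbhd y.2.
Proof.
move=> /dmv2P dmvM xM yM /(dmvM _ _ xM yM).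
case/orP => [xy | /existsP[w /andP[/andP[_ xw] wy]]].
  by exists y.2; [apply: cart_adj_nbhd | apply: closed_nbhd_refl].
by exists w.2; apply: cart_adj_nbhd; rewrite // adj_sym.
Qed.

Section LayerColors.

Variables (k : nat) (f : {ffun cartesian G H -> 'I_k}).
Hypothesis dmv_f : forall i, dmv2 [set x | f x == i].

Definition layer_colors h : {set 'I_k} := [set f (g, h) | g : G].

Lemma chi_mu2_le_layer_colors h : chi_mu2 G <= #|layer_colors h|.
Proof.
apply: chi_mu2_le_card_image => i.
have -> : [set g | f (g, h) == i] = layer [set x | f x == i] h.
  by apply/setP => g; rewrite !inE.
exact: dmv2_layer.
Qed.

Lemma layer_colors_disjoint (S : {set H}) : two_packing S ->
  {in S &, forall h h', h != h' -> [disjoint layer_colors h & layer_colors h']}.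
Proof.
move=> packS h h' hS h'S hh'; rewrite disjoint_subset.
apply/subsetP => _ /imsetP[g _ ->]; rewrite inE; apply/imsetP => -[g' _ eq_fg].
have [|||b bh bh'] :=
  dmv2_cart_nbhd_meet (x := (g, h)) (y := (g', h')) (dmv_f (f (g, h))).
- by rewrite inE.
- by rewrite inE eq_fg.
- by rewrite xpair_eqE (negbTE hh') andbF.
by rewrite (disjointFr (two_packing_disjoint packS hS h'S hh') bh) in bh'.
Qed.

End LayerColors.

Lemma chi_mu2_cart_ge_packing (S : {set H}) :
  two_packing S -> chi_mu2 G * #|S| <= chi_mu2 (cartesian G H).
Proof.
move=> packS; have /existsP[f /forallP dmv_f] := chi_mu2_colorable (cartesian G H).
rewrite mulnC -sum_nat_const -[X in _ <= X]card_ord.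
apply: leq_trans (sum_card_disjoint_le (layer_colors_disjoint dmv_f packS)).
by apply: leq_sum => h _; apply: chi_mu2_le_layer_colors.
Qed.

Lemma chi_mu2_cart_ge : chi_mu2 G * rho2 H <= chi_mu2 (cartesian G H).
Proof. by have [S packS <-] := rho2_attained H; apply: chi_mu2_cart_ge_packing. Qed.

Lemma chi_mu2_cartC : chi_mu2 (cartesian G H) = chi_mu2 (cartesian H G).
Proof.
have swapK (A B : sgraph) :
    cancel (fun x : cartesian A B => (x.2, x.1)) (fun y => (y.2, y.1)) by case.
have swap_adj (A B : sgraph) :
  {mono (fun x : cartesian A B => (x.2, x.1) : cartesian B A) : x y / adj x y}.
  by move=> x y; rewrite /= /cart_adj /= orbC !(andbC (_ == _)).
by apply/anti_leq/andP; split;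
  apply: chi_mu2_le_iso (swapK _ _) (swapK _ _) (swap_adj _ _).
Qed.

End Cartesian.

Lemma chi_mu2_cart_ge_max (G H : sgraph) :
  maxn (chi_mu2 G * rho2 H) (chi_mu2 H * rho2 G) <= chi_mu2 (cartesian G H).
Proof. by rewrite geq_max chi_mu2_cart_ge chi_mu2_cartC chi_mu2_cart_ge. Qed.

Section CompleteStar.

Variable T : finType.

Lemma complete_adj_sym : symmetric (fun x y : T => x != y).
Proof. by move=> x y; rewrite eq_sym. Qed.

Lemma complete_adj_irr : irreflexive (fun x y : T => x != y).
Proof. by move=> x; rewrite eqxx. Qed.

Definition complete := SGraph complete_adj_sym complete_adj_irr.

Definition star_adj (x y : option T) := (x == None) != (y == None).

Lemma star_adj_sym : symmetric star_adj.
Proof. by move=> x y; rewrite /star_adj eq_sym. Qed.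

Lemma star_adj_irr : irreflexive star_adj.
Proof. by move=> x; rewrite /star_adj eqxx. Qed.

Definition star := SGraph star_adj_sym star_adj_irr.

Lemma complete_connected : connected complete.
Proof. by move=> x y; have [->|xy] := eqVneq x y; [apply: connect0 | apply: connect1]. Qed.

Lemma star_connected : connected star.
Proof.
have center_to (x : star) : connect (@adj star) None x.
  by case: x => [a|]; [apply: connect1 | apply: connect0].
move=> x y; apply: connect_trans (center_to y).
by rewrite (sym_connect_sym (@adj_sym star)).
Qed.

Lemma star_not_dmv2 (a b : T) : a != b -> ~~ dmv2 [set: star].
Proof.
move=> ab; apply/dmv2P => /(_ (Some a) (Some b)); rewrite !inE.
rewrite (inj_eq Some_inj) ab => /(_ isT isT isT) /=.
by case/existsP => w; rewrite inE.
Qed.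

End CompleteStar.

Definition K2P3_color (x : cartesian (complete bool) (star bool)) : bool :=
  (x.2 == Some true) || x.1 && (x.2 == None).

Lemma dmv2_K2P3_color c : dmv2 [set x | K2P3_color x == c].
Proof.
apply/dmv2P => -[a b] [a' b']; rewrite !inE.
case: c a b a' b' => [] [] [[]|] [] [[]|] //= _ _ _; apply/existsP;
  first [by exists (true, None); rewrite inE | by exists (false, None); rewrite inE].
Qed.

Lemma K2P3_sharp :
  chi_mu2 (cartesian (complete bool) (star bool))
  = maxn (chi_mu2 (complete bool) * rho2 (star bool))
         (chi_mu2 (star bool) * rho2 (complete bool)).
Proof.
apply/anti_leq; rewrite chi_mu2_cart_ge_max andbT.
apply: leq_trans (leq_maxr _ _).
have chi_prod : chi_mu2 (cartesian (complete bool) (star bool)) <= 2.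
  apply: leq_trans (chi_mu2_le_card_image dmv2_K2P3_color) _.
  by rewrite -card_bool max_card.
have chi_star : 1 < chi_mu2 (star bool).
  exact: chi_mu2_gt1 (None : star bool) (star_not_dmv2 (isT : true != false)).
apply: leq_trans chi_prod _; rewrite -[2]muln1.
by apply: leq_mul => //; apply: (rho2_gt0 (true : complete bool)).
Qed.

Theorem theorem6p2 :
  (forall G H : sgraph, connected G -> connected H ->
     maxn (chi_mu2 G * rho2 H) (chi_mu2 H * rho2 G) <= chi_mu2 (cartesian G H))
  /\
  (exists G H : sgraph, [/\ connected G, connected H,
     1 < #|vert G|, 1 < #|vert H| &
     chi_mu2 (cartesian G H) = maxn (chi_mu2 G * rho2 H) (chi_mu2 H * rho2 G)]).
Proof.
split=> [G H _ _ | ]; first exact: chi_mu2_cart_ge_max.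
exists (complete bool), (star bool); split.
- exact: complete_connected.
- exact: star_connected.
- by rewrite card_bool.
- by rewrite card_option card_bool.
exact: K2P3_sharp.
Qed.
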